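(* Let $p\in\mathbb N$ and let $f_1,\dots,f_p$ be infinitely differentiable functions of $t$. Define $g_{i+pn}=f^{(n)}_i$ for $i=1,\dots,p$, $n=0,1,2,\dots$, and $$f_{k+(p+1)m}=W(g_k,\dots,g_{k+m}),\qquad k=1,\dots,p+1,\ m=0,1,2,\dots$$ (this is consistent with the given $f_1,\dots,f_p$ for $m=0$), and set $f_{-p}=\dots=f_0=1$. Then the functions $f_j$, $j\ge -p$, satisfy $$f_{j-1}f'_j-f'_{j-1}f_j=f_{j-p-1}f_{j+p},\qquad j=1,2,\dots.$$
   Context: $W(y_0,\dots,y_m)=\det\bigl(y^{(i)}_j\bigr)_{i,j=0}^m$ denotes the Wronskian; $f^{(n)}$ is the $n$-th derivative with respect to $t$. *)

From mathcomp Require Import all_boot all_order all_algebra.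
From mathcomp Require Import all_classical all_reals all_analysis.
Set Implicit Arguments. Unset Strict Implicit. Unset Printing Implicit Defensive.
Import Order.TTheory GRing.Theory Num.Theory.
Local Open Scope ring_scope.

Section Defs.
Variable R : realType.

Definition wronskian (ys : nat -> R -> R) (m : nat) (t : R) : R :=
  \det (\matrix_(i < m.+1, j < m.+1) derive1n i (ys j) t).

(* g_{i+pn} = f_i^{(n)} for i = 1..p, n >= 0 ; i.e. for j >= 1,
   i = ((j-1) mod p) + 1, n = (j-1) div p.  (g_0 is unused.) *)
Definition gfun (p : nat) (f : nat -> R -> R) (j : nat) : R -> R :=
  derive1n ((j.-1) %/ p)%N (f (((j.-1) %% p).+1)%N).

(* f_j for j : int.  For j >= 1: j = k + (p+1) m with k = ((j-1) mod (p+1))+1,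
   m = (j-1) div (p+1), and f_j = W(g_k, ..., g_{k+m}).  For j <= 0: f_j = 1. *)
Definition ffun (p : nat) (f : nat -> R -> R) (j : int) : R -> R :=
  match j with
  | Posz (S j') =>
      wronskian (fun c => gfun p f (((j' %% p.+1).+1) + c)%N) (j' %/ p.+1)%N
  | _ => fun _ => 1
  end.
End Defs.

From mathcomp Require Import all_boot all_order all_algebra perm ring zify.
From mathcomp Require Import all_classical all_reals all_analysis.
Import Order.TTheory GRing.Theory Num.Theory.
Local Open Scope ring_scope.

(* Every f_j is a Wronskian of consecutive g's, and the derivative of a
   Wronskian is the same determinant with its last row differentiated once
   more.  Write j - 1 = m(p+1) + k with 0 <= k <= p.  For k > 0, the functions
   f_{j-1}, f_j, f_{j+p}, f_{j-p-1} and the two derivatives are minors of the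
   Wronskian array of g_k, ..., g_{k+m+1}, and the relation is the
   Desnanot-Jacobi identity.  For k = 0, the shift g_{c+p} = g_c' turns f_{j-1}
   and f_{j+p} into Wronskians of g_1', g_2', ..., i.e. minors on shifted rows
   of the Wronskian array of g_1, g_2, ..., and the relation is a three-term
   Pluecker identity, which is Desnanot-Jacobi again after bordering the array
   by a unit column.  Desnanot-Jacobi itself follows from the Schur complement
   when the leading block is invertible, and in general by perturbing that
   block into a characteristic matrix. *)

Definition detf {R : comPzRingType} n (F : nat -> nat -> R) : R :=
  \det (\matrix_(i < n, j < n) F i j).

Lemma eq_detf {R : comPzRingType} n (F G : nat -> nat -> R) :
  (forall i j, (i < n)%N -> (j < n)%N -> F i j = G i j) -> detf n F = detf n G.
Proof. by move=> eqFG; congr (\det _); apply/matrixP => i j; rewrite !mxE eqFG. Qed.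

Lemma det_mx2 {R : comPzRingType} (M : 'M[R]_2) :
  \det M = M 0 0 * M 1 1 - M 0 1 * M 1 0.
Proof.
rewrite (expand_det_row _ 0) !big_ord_recl big_ord0 /cofactor !det_mx11 !mxE /=.
have -> : lift 0 0 = 1 :> 'I_2 by exact/val_inj.
have -> : lift 1 0 = 0 :> 'I_2 by exact/val_inj.
by rewrite expr0 expr1 !mul1r addr0 mulN1r mulrN.
Qed.

(* Multiplying on the right by [[1, - adj A *m B], [0, det A]] gives a block
   lower triangular matrix. *)
Lemma det_block_Schur {R : comPzRingType} {n m}
    (A : 'M[R]_n) (B : 'M[R]_(n, m)) (C : 'M[R]_(m, n)) D :
  \det (block_mx A B C D) * \det A ^+ m =
  \det A * \det (\det A *: D - C *m \adj A *m B).
Proof.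
have := det_mulmx (block_mx A B C D) (block_mx 1%:M (- (\adj A *m B)) 0 (\det A)%:M).
rewrite mulmx_block det_ublock det1 det_scalar mul1r => <-.
rewrite !mulmx1 !mulmx0 !addr0 !mulmxN mulmxA mul_mx_adj mul_scalar_mx.
rewrite mul_mx_scalar addNr det_lblock; congr (_ * \det _).
by rewrite addrC mul_mx_scalar mulmxA.
Qed.

Lemma desnanot_jacobi_block {R : idomainType} {n}
    (A : 'M[R]_n) (B : 'M[R]_(n, 2)) (C : 'M[R]_(2, n)) (D : 'M[R]_2) :
  \det A != 0 ->
  \det (block_mx A B C D) * \det A =
    \det (block_mx A (col 0 B) (row 0 C) (D 0 0)%:M)
    * \det (block_mx A (col 1 B) (row 1 C) (D 1 1)%:M)
  - \det (block_mx A (col 1 B) (row 0 C) (D 0 1)%:M)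
    * \det (block_mx A (col 0 B) (row 1 C) (D 1 0)%:M).
Proof.
move=> detA_neq0.
have minorE i k : \det (block_mx A (col k B) (row i C) (D i k)%:M) =
                  (\det A *: D - C *m \adj A *m B) i k.
  apply: (mulIf detA_neq0).
  rewrite -[X in _ * X]expr1 det_block_Schur det_mx11 mulrC; congr (_ * _).
  rewrite !mxE eqxx mulr1n; congr (_ - _).
  by apply: eq_bigr => l _; rewrite -row_mul !mxE.
have := det_block_Schur A B C D; rewrite det_mx2 -!minorE => Schur.
by apply: (mulfI detA_neq0); rewrite -Schur expr2; ring.
Qed.

Definition bordered_minor {R : comPzRingType} n (F : nat -> nat -> R) r c :=
  detf n.+1 (fun i j => F (if (i < n)%N then i else n + r)%N
                          (if (j < n)%N then j else n + c)%N).

Lemma border_index0 n i : (i < n.+1)%N -> (if (i < n)%N then i else n + 0)%N = i.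
Proof. by case: ifP; lia. Qed.

Lemma border_index1 n i : (i < n.+1)%N -> (if (i < n)%N then i else n + 1)%N = bump n i.
Proof. by rewrite /bump; case: ifP; lia. Qed.

Lemma desnanot_jacobi_neq0 {R : idomainType} {n} {F : nat -> nat -> R} :
  detf n F != 0 ->
  detf n.+2 F * detf n F = bordered_minor n F 0 0 * bordered_minor n F 1 1
                           - bordered_minor n F 0 1 * bordered_minor n F 1 0.
Proof.
move=> detF_neq0.
pose A := \matrix_(i < n, j < n) F i j.
pose B := \matrix_(i < n, j < 2) F i (n + j)%N.
pose C := \matrix_(i < 2, j < n) F (n + i)%N j.
pose D := \matrix_(i < 2, j < 2) F (n + i)%N (n + j)%N.
have -> : detf n.+2 F = \det (block_mx A B C D).
  rewrite -addn2; congr (\det _); apply/matrixP => i j; rewrite !mxE.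
  by case: (splitP i) => i' ->; rewrite !mxE; case: (splitP j) => j' ->; rewrite !mxE.
have minorE (r c : 'I_2) :
    bordered_minor n F r c = \det (block_mx A (col c B) (row r C) (D r c)%:M).
  rewrite /bordered_minor /detf -addn1; congr (\det _); apply/matrixP => i j.
  rewrite !mxE; case: (splitP i) => i' Ei; rewrite !mxE; case: (splitP j) => j' Ej.
  all: rewrite ?mxE ?Ei ?Ej /= ?ltn_ord ?(ltnNge _ n, leq_addr) //=.
  by rewrite (ord1 i') (ord1 j') eqxx mulr1n.
by have := desnanot_jacobi_block A B C D detF_neq0; rewrite -!minorE.
Qed.

Lemma detf_horner {R : comNzRingType} n (G : nat -> nat -> {poly R}) x :
  (detf n G).[x] = detf n (fun i j => (G i j).[x]).
Proof.
rewrite /detf -[LHS]/(horner_eval x _) -det_map_mx; congr (\det _).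
by apply/matrixP => i j; rewrite !mxE.
Qed.

(* Perturbing the leading block by 'X makes its determinant a characteristic
   polynomial, hence nonzero; evaluating at 0 recovers F. *)
Lemma desnanot_jacobi {R : idomainType} n (F : nat -> nat -> R) :
  detf n.+2 F * detf n F = bordered_minor n F 0 0 * bordered_minor n F 1 1
                           - bordered_minor n F 0 1 * bordered_minor n F 1 0.
Proof.
pose FX i j : {poly R} := (F i j)%:P + (if (i == j) && (i < n)%N then 'X else 0).
have detFX_neq0 : detf n FX != 0.
  have -> : detf n FX = char_poly (- \matrix_(i < n, j < n) F i j).
    rewrite /detf /char_poly /char_poly_mx; congr (\det _).
    apply/matrixP => i j; rewrite !mxE /FX ltn_ord andbT polyCN opprK addrC.
    by case: (i == j :> nat) (val_eqE i j) => <-.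
  exact/monic_neq0/char_poly_monic.
have FX0 i j : (FX i j).[0] = F i j.
  by rewrite /FX hornerD hornerC; case: ifP; rewrite ?hornerX ?horner0 addr0.
have detFX0 m : (detf m FX).[0] = detf m F.
  by rewrite detf_horner; apply: eq_detf => *; apply: FX0.
have minorFX0 r c : (bordered_minor n FX r c).[0] = bordered_minor n F r c.
  by rewrite detf_horner; apply: eq_detf => *; apply: FX0.
have := congr1 (horner^~ 0) (desnanot_jacobi_neq0 detFX_neq0).
by rewrite /= !hornerE !detFX0 !minorFX0.
Qed.

Definition swap_next (m j : nat) := if j == m then m.+1 else if j == m.+1 then m else j.

Definition cycle_prefix (m j : nat) := if (j < m)%N then j.+1 else if j == m then 0%N else j.

Lemma detf_col_swap {R : comNzRingType} {n m} (H : nat -> nat -> R) : (m.+1 < n)%N ->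
  detf n (fun i j => H i (swap_next m j)) = - detf n H.
Proof.
move=> lt_m1n; have lt_mn := ltnW lt_m1n.
pose j1 := Ordinal lt_mn; pose j2 := Ordinal lt_m1n.
have -> : detf n (fun i j => H i (swap_next m j)) =
          \det (xcol j1 j2 (\matrix_(i, j) H i j)).
  rewrite /detf; congr (\det _); apply/matrixP => i j; rewrite !mxE /swap_next.
  case: tpermP => [->|->|/eqP ne1 /eqP ne2] /=; rewrite ?eqxx ?(gtn_eqF (ltnSn m)) //.
  by move: ne1 ne2; rewrite -!val_eqE /= => /negPf -> /negPf ->.
rewrite xcolE det_mulmx det_perm odd_tperm.
have -> : j1 != j2 by rewrite -val_eqE /= neq_ltn ltnSn.
by rewrite expr1 mulrN1.
Qed.

Lemma detf_col_cycle {R : comNzRingType} {n m} (G : nat -> nat -> R) : (m < n)%N ->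
  detf n (fun i j => G i (cycle_prefix m j)) = (-1) ^+ m * detf n G.
Proof.
elim: m => [|m IHm] lt_mn.
  by rewrite mul1r; apply: eq_detf => i j _ _; rewrite /cycle_prefix; case: eqP => [->|].
have cycleS j : cycle_prefix m.+1 j = cycle_prefix m (swap_next m j).
  by rewrite /cycle_prefix /swap_next; repeat case: ifP; lia.
transitivity (detf n (fun i j => G i (cycle_prefix m (swap_next m j)))).
  by apply: eq_detf => i j _ _; rewrite cycleS.
rewrite (detf_col_swap (fun i j => G i (cycle_prefix m j))) // IHm 1?ltnW //.
by rewrite exprS mulN1r mulNr.
Qed.

Lemma detf_col_delta0 {R : comNzRingType} {n} (H : nat -> nat -> R) :
  detf n.+1 (fun i j => if j == n then (i == 0%N)%:R else H i j) =
  (-1) ^+ n * detf n (fun i j => H i.+1 j).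
Proof.
rewrite /detf (expand_det_col _ ord_max) big_ord_recl big1 ?addr0.
  rewrite !mxE /= eqxx mul1r /cofactor add0n; congr (_ * \det _).
  apply/matrixP => i j; rewrite !mxE /= /bump /= leqNgt ltn_ord /= add0n.
  by rewrite (ltn_eqF (ltn_ord j)).
by move=> i _; rewrite !mxE /= eqxx mul0r.
Qed.

(* Desnanot-Jacobi with respect to the last two rows and the first and last
   columns; cycling column 0 to position m reduces it to [desnanot_jacobi]. *)
Lemma desnanot_jacobi_outer_cols {R : idomainType} (a : nat -> nat -> R) m :
  detf m.+1 a * detf m.+1 (fun i j => a (bump m i) j.+1)
  - detf m.+1 (fun i j => a (bump m i) j) * detf m.+1 (fun i j => a i j.+1)
  = detf m (fun i j => a i j.+1) * detf m.+2 a.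
Proof.
pose b i j := a i (cycle_prefix m j).
have cycle_bump j : (j < m.+1)%N -> cycle_prefix m (bump m j) = j.+1.
  by rewrite /cycle_prefix /bump; repeat case: ifP; lia.
have := desnanot_jacobi m b.
have -> : detf m.+2 b = (-1) ^+ m * detf m.+2 a by apply: detf_col_cycle.
have -> : detf m b = detf m (fun i j => a i j.+1).
  by apply: eq_detf => i j _ lt_jm; rewrite /b /cycle_prefix lt_jm.
have -> : bordered_minor m b 0 0 = (-1) ^+ m * detf m.+1 a.
  rewrite -detf_col_cycle //; apply: eq_detf => i j lt_i lt_j.
  by rewrite /b !border_index0.
have -> : bordered_minor m b 1 0 = (-1) ^+ m * detf m.+1 (fun i j => a (bump m i) j).
  rewrite -(detf_col_cycle (fun i j => a (bump m i) j)) //.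
  apply: eq_detf => i j lt_i lt_j.
  by rewrite /b border_index1 // border_index0.
have -> : bordered_minor m b 0 1 = detf m.+1 (fun i j => a i j.+1).
  apply: eq_detf => i j lt_i lt_j.
  by rewrite /b border_index0 // border_index1 // cycle_bump.
have -> : bordered_minor m b 1 1 = detf m.+1 (fun i j => a (bump m i) j.+1).
  apply: eq_detf => i j lt_i lt_j.
  by rewrite /b !border_index1 // cycle_bump.
have sign_neq0 : (-1) ^+ m != 0 :> R by rewrite signr_eq0.
move=> DJ; apply: (mulfI sign_neq0).
by rewrite [RHS]mulrCA [RHS]mulrC DJ; ring.
Qed.

(* Three-term relation between the maximal minors of an (n+3) x (n+2) array:
   Desnanot-Jacobi for the square array obtained by appending the column e_0. *)
Lemma plucker_rows {R : idomainType} (a : nat -> nat -> R) n :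
  detf n.+1 (fun i j => a i.+1 j) * detf n.+2 (fun i j => a (bump n.+1 i) j)
  - detf n.+1 (fun i j => a (bump n i).+1 j) * detf n.+2 a
  = detf n.+1 a * detf n.+2 (fun i j => a i.+1 j).
Proof.
pose F i j := if j == n.+2 then (i == 0%N)%:R else a i j.
have F_col j : (j < n.+2)%N -> forall i, F i j = a i j.
  by move=> lt_j i; rewrite /F ifF //; lia.
have F_bump i j : (j < n.+2)%N ->
    F i (bump n.+1 j) = if j == n.+1 then (i == 0%N)%:R else a i j.
  move=> lt_j; rewrite /F /bump.
  have [->|ne_j] := eqVneq j n.+1; first by rewrite leqnn eqxx.
  have -> : (n.+1 <= j)%N = false by lia.
  by rewrite add0n !ifF //; lia.
have := desnanot_jacobi n.+1 F.
rewrite [detf n.+3 F]detf_col_delta0.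
have -> : detf n.+1 F = detf n.+1 a.
  by apply: eq_detf => i j _ lt_j; rewrite F_col //; lia.
have -> : bordered_minor n.+1 F 0 0 = detf n.+2 a.
  by apply: eq_detf => i j lt_i lt_j; rewrite !border_index0 // F_col.
have -> : bordered_minor n.+1 F 1 0 = detf n.+2 (fun i j => a (bump n.+1 i) j).
  by apply: eq_detf => i j lt_i lt_j; rewrite border_index1 // border_index0 // F_col.
have -> : bordered_minor n.+1 F 0 1 = (-1) ^+ n.+1 * detf n.+1 (fun i j => a i.+1 j).
  rewrite -detf_col_delta0; apply: eq_detf => i j lt_i lt_j.
  by rewrite border_index0 // border_index1 // F_bump.
have -> : bordered_minor n.+1 F 1 1 =
          (-1) ^+ n.+1 * detf n.+1 (fun i j => a (bump n i).+1 j).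
  transitivity ((-1) ^+ n.+1 * detf n.+1 (fun i j => a (bump n.+1 i.+1) j)).
    rewrite -(detf_col_delta0 (fun i j => a (bump n.+1 i) j)).
    apply: eq_detf => i j lt_i lt_j; rewrite !border_index1 // F_bump //.
    by case: i lt_i => [|i] _ //; rewrite bumpS.
  by congr (_ * _); apply: eq_detf => i j _ _; rewrite bumpS.
have sign_neq0 : (-1) ^+ n.+1 != 0 :> R by rewrite signr_eq0.
rewrite exprS mulN1r !mulNr => /(congr1 -%R); rewrite opprK => DJ.
by apply: (mulfI sign_neq0); rewrite [RHS]mulrCA [RHS]mulrC DJ; ring.
Qed.

Section DeriveDet.
Variables (R : realType) (V : normedModType R).

Lemma is_derive_sum_seq (W : normedModType R) (I : Type) (r : seq I)
    (h : I -> V -> W) (dh : I -> W) (x v : V) :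
  (forall i, is_derive x v (h i) (dh i)) ->
  is_derive x v (fun y => \sum_(i <- r) h i y) (\sum_(i <- r) dh i).
Proof.
move=> hdh; elim: r => [|i r IHr].
  by rewrite big_nil; under eq_fun do rewrite big_nil; apply: is_derive_cst.
by rewrite big_cons; under eq_fun do rewrite big_cons; apply: is_deriveD.
Qed.

Lemma is_derive_prod n (h : 'I_n -> V -> R) (dh : 'I_n -> R) (x v : V) :
  (forall i, is_derive x v (h i) (dh i)) ->
  is_derive x v (fun y => \prod_(i < n) h i y)
    (\sum_(k < n) \prod_(i < n) (if i == k then dh i else h i x)).
Proof.
elim: n h dh => [|n IHn] h dh hdh.
  by rewrite big_ord0; under eq_fun do rewrite big_ord0; apply: is_derive_cst.
under eq_fun do rewrite big_ord_recr.
have := is_deriveM (IHn _ (fun i => dh (widen_ord (leqnSn n) i)) (fun i => hdh _))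
                   (hdh ord_max).
move/is_derive_eq; apply.
have neq_max (i : 'I_n) : (widen_ord (leqnSn n) i == ord_max) = false.
  by apply/negbTE; rewrite -val_eqE /= neq_ltn ltn_ord.
rewrite big_ord_recr /= big_ord_recr /= eqxx addrC; congr (_ + _).
  by rewrite /GRing.scale /=; congr (_ * _); apply: eq_bigr => i _; rewrite neq_max.
rewrite /GRing.scale /= mulrC big_distrl /=; apply: eq_bigr => k _.
by rewrite big_ord_recr /= eq_sym neq_max.
Qed.

Lemma is_derive_detf n (F : nat -> nat -> V -> R) (dF : nat -> nat -> R) (x v : V) :
  (forall i j, is_derive x v (F i j) (dF i j)) ->
  is_derive x v (fun y => detf n (fun i j => F i j y))
    (\sum_(k < n) detf n (fun i j => if i == k then dF i j else F i j x)).
Proof.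
move=> FdF.
have -> : (fun y => detf n (fun i j => F i j y)) =
    (fun y => \sum_(s : 'S_n) (-1) ^+ s * \prod_(i < n) F i (s i) y).
  apply/funext => y; rewrite /detf /determinant; apply: eq_bigr => s _.
  by congr (_ * _); apply: eq_bigr => i _; rewrite mxE.
apply: is_derive_eq.
  apply: is_derive_sum_seq => s; apply: is_deriveZ.
  by apply: (@is_derive_prod _ (fun i => F i (s i))) => i; apply: FdF.
under eq_bigr do rewrite /GRing.scale /= big_distrr.
rewrite exchange_big /=; apply: eq_bigr => k _.
rewrite /detf /determinant /=; apply: eq_bigr => s _.
by congr (_ * _); apply: eq_bigr => i _; rewrite mxE -val_eqE.
Qed.

End DeriveDet.

(* Differentiating row k < m of a Wronskian duplicates row k + 1, so only the
   term of the last row survives. *)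
Lemma derive1_wronskian {R : realType} (y : nat -> R -> R) m t :
  (forall r c, derivable (derive1n r (y c)) t 1) ->
  derive1 (wronskian y m) t = detf m.+1 (fun i j => derive1n (bump m i) (y j) t).
Proof.
move=> y_smooth; rewrite derive1E.
have D : is_derive t 1 (wronskian y m)
    (\sum_(k < m.+1) detf m.+1 (fun i j => if i == k then derive1n i.+1 (y j) t
                                          else derive1n i (y j) t)).
  apply: (@is_derive_detf _ _ m.+1 (fun i j => derive1n i (y j))) => i j.
  by rewrite derive1nS derive1E; apply: derivableP.
rewrite derive_val big_ord_recr /= big1 ?add0r.
  apply: eq_detf => i j lt_im _; rewrite /bump.
  case: eqP => [->|/eqP ne_im]; first by rewrite leqnn.
  by rewrite leqNgt ltn_neqAle ne_im -ltnS lt_im.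
move=> k _; have lt_k1 : (k.+1 < m.+1)%N by rewrite ltnS ltn_ord.
rewrite /detf (@determinant_alternate _ _ _ (widen_ord (leqnSn m) k) (Ordinal lt_k1)) //.
  by rewrite -val_eqE /= neq_ltn ltnSn.
by move=> j; rewrite !mxE /= eqxx (gtn_eqF (ltnSn k)).
Qed.

Lemma wronskian_derive1 {R : realType} (y : nat -> R -> R) m :
  wronskian (fun c => derive1 (y c)) m =
  (fun t => detf m.+1 (fun i j => derive1n i.+1 (y j) t)).
Proof.
apply/funext => t; congr (\det _).
by apply/matrixP => i j; rewrite !mxE derive1Sn.
Qed.

Section WronskianIdentities.
Variables (R : realType) (y : nat -> R -> R) (t : R).
Hypothesis y_smooth : forall r c, derivable (derive1n r (y c)) t 1.

Lemma wronskian_shift_identity m :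
  wronskian y m t * derive1 (wronskian (fun c => y c.+1) m) t
  - derive1 (wronskian y m) t * wronskian (fun c => y c.+1) m t
  = detf m (fun i j => derive1n i (y j.+1) t) * wronskian y m.+1 t.
Proof.
rewrite !derive1_wronskian //.
exact: (desnanot_jacobi_outer_cols (fun r c => derive1n r (y c) t)).
Qed.

Lemma wronskian_derive_identity m :
  wronskian (fun c => derive1 (y c)) m t * derive1 (wronskian y m.+1) t
  - derive1 (wronskian (fun c => derive1 (y c)) m) t * wronskian y m.+1 t
  = wronskian y m t * wronskian (fun c => derive1 (y c)) m.+1 t.
Proof.
rewrite !derive1_wronskian //; last by move=> r c; rewrite -derive1Sn.
rewrite !wronskian_derive1.
have -> : detf m.+1 (fun i j => derive1n (bump m i) (derive1 (y j)) t) =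
          detf m.+1 (fun i j => derive1n (bump m i).+1 (y j) t).
  by apply: eq_detf => i j _ _; rewrite derive1Sn.
exact: (plucker_rows (fun r c => derive1n r (y c) t)).
Qed.

End WronskianIdentities.

Section WronskianSequence.
Variables (R : realType) (p : nat) (f : nat -> R -> R).

Lemma ffun_le0 (z : int) : z <= 0 -> ffun p f z = fun _ => 1.
Proof. by case: z => [[|n]|n]. Qed.

Lemma ffun_wronskian m k : (k <= p)%N ->
  ffun p f (m * p.+1 + k)%N.+1 = wronskian (fun c => gfun p f (k.+1 + c)%N) m.
Proof. by move=> le_kp; rewrite /ffun divnMDl // modnMDl modn_small // divn_small // addn0. Qed.

(* The relation of the theorem for j = J + 1. *)
Definition bilinear_relation (J : nat) (t : R) : Prop :=
  ffun p f J t * derive1 (ffun p f J.+1) t - derive1 (ffun p f J) t * ffun p f J.+1 t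
  = ffun p f (J%:Z - p%:Z) t * ffun p f (J + p)%N.+1 t.

Hypothesis p_gt0 : (0 < p)%N.
Hypothesis f_smooth : forall i : nat, (1 <= i <= p)%N ->
  forall (n : nat) (t : R), derivable (derive1n n (f i)) t 1.

Lemma gfun_smooth c r t : derivable (derive1n r (gfun p f c)) t 1.
Proof. by rewrite /gfun /derive1n -iterD; apply: f_smooth; rewrite ltnS ltn_pmod. Qed.

Lemma gfunDp c : (0 < c)%N -> gfun p f (c + p)%N = derive1 (gfun p f c).
Proof.
move=> c_gt0; rewrite /gfun.
have -> : (c + p).-1 = (1 * p + c.-1)%N by lia.
by rewrite divnMDl // modnMDl add1n derive1nS.
Qed.

Lemma ffun_wronskian_derive1 m :
  ffun p f (m * p.+1 + p)%N.+1 = wronskian (fun c => derive1 (gfun p f c.+1)) m.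
Proof.
rewrite ffun_wronskian //; congr wronskian; apply/funext => c.
by rewrite -gfunDp // addSnnS addnC.
Qed.

Lemma bilinear_relation0 t : bilinear_relation 0 t.
Proof.
rewrite /bilinear_relation (ffun_le0 0) // (ffun_le0 (0 - p%:Z)) ?sub0r ?oppr_le0 //.
rewrite -[1%N]/((0 * p.+1 + 0).+1)%N -[(0 + p).+1]/((0 * p.+1 + p).+1)%N.
rewrite ffun_wronskian_derive1 ffun_wronskian // derive1_wronskian //; last first.
  by move=> r c; apply: gfun_smooth.
rewrite -/(cst 1) derive1_cst mul0r subr0 !mul1r.
by rewrite /detf /wronskian !det_mx11 !mxE.
Qed.

Lemma bilinear_relation_interior m k t :
  (k < p)%N -> bilinear_relation (m * p.+1 + k.+1)%N t.
Proof.
move=> lt_kp; have le_kp := ltnW lt_kp; pose y c := gfun p f (k.+1 + c).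
have ffun_shift n : ffun p f (n * p.+1 + k.+1)%N.+1 = wronskian (fun c => y c.+1) n.
  by rewrite ffun_wronskian //; congr wronskian; apply/funext => c; rewrite /y addSnnS.
have ffun_subp : ffun p f ((m * p.+1 + k.+1)%N%:Z - p%:Z) t =
                 detf m (fun i j => derive1n i (y j.+1) t).
  case: m => [|m]; first by rewrite ffun_le0 /detf ?det_mx00 //; lia.
  have -> : (m.+1 * p.+1 + k.+1)%N%:Z - p%:Z = (m * p.+1 + k.+1)%N.+1 by lia.
  by rewrite ffun_shift.
rewrite /bilinear_relation ffun_subp ffun_shift addnS.
have -> : (m * p.+1 + k + p)%N.+2 = (m.+1 * p.+1 + k)%N.+1 by lia.
rewrite !ffun_wronskian //.
by apply: wronskian_shift_identity => r c; apply: gfun_smooth.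
Qed.

Lemma bilinear_relation_boundary m t : bilinear_relation (m.+1 * p.+1)%N t.
Proof.
have -> : (m.+1 * p.+1 = (m * p.+1 + p).+1)%N by lia.
rewrite /bilinear_relation.
have -> : (m * p.+1 + p)%N.+2 = (m.+1 * p.+1 + 0)%N.+1 by lia.
have -> : (m * p.+1 + p)%N.+1%:Z - p%:Z = (m * p.+1 + 0)%N.+1 by lia.
have -> : ((m * p.+1 + p).+1 + p)%N.+1 = (m.+1 * p.+1 + p)%N.+1 by lia.
rewrite !ffun_wronskian_derive1 !ffun_wronskian //.
by apply: wronskian_derive_identity => r c; apply: gfun_smooth.
Qed.

End WronskianSequence.

Theorem proposition4 (R : realType) (p : nat) (f : nat -> R -> R)
  (hp : (0 < p)%N)
  (hsmooth : forall i : nat, (1 <= i <= p)%N ->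
     forall (n : nat) (t : R), derivable (derive1n n (f i)) t 1) :
  forall (j : nat), (0 < j)%N -> forall t : R,
    ffun p f (j%:Z - 1) t * derive1 (ffun p f j%:Z) t
    - derive1 (ffun p f (j%:Z - 1)) t * ffun p f j%:Z t
    = ffun p f (j%:Z - p%:Z - 1) t * ffun p f (j%:Z + p%:Z) t.
Proof.
move=> [//|J] _ t.
have -> : J.+1%:Z - 1 = J by lia.
have -> : J.+1%:Z - p%:Z - 1 = J%:Z - p%:Z by lia.
have -> : J.+1%:Z + p%:Z = (J + p)%N.+1 by lia.
have [m [k lt_kp1 ->]] : exists m, exists2 k, (k < p.+1)%N & J = (m * p.+1 + k)%N.
  by exists (J %/ p.+1)%N, (J %% p.+1)%N; rewrite ?ltn_pmod -?divn_eq.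
case: k lt_kp1 => [|k] lt_kp1; last exact: bilinear_relation_interior.
rewrite addn0; case: m => [|m]; first exact: bilinear_relation0.
exact: bilinear_relation_boundary.
Qed.
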